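(* Assume that for every $j\in J$ the subspace $Y^\perp$ is not contained in the hyperplane $\{p_j=0\}$, and that the critical set $C_{\mathcal A,a}$ is nonempty. Then the map $$\Psi_{\mathcal A,a}:U(\mathcal A)\to\mathbb C^n\times(\mathbb C^n)^*,\qquad (x,u)\mapsto\Big(x,\ \frac{\partial\Phi_{\mathcal A,a}}{\partial z_1}(x,u),\dots,\frac{\partial\Phi_{\mathcal A,a}}{\partial z_n}(x,u)\Big)=\Big(x,\frac{a_1}{f_1(x,u)},\dots,\frac{a_n}{f_n(x,u)}\Big),$$ restricted to $C_{\mathcal A,a}$, is a diffeomorphism of $C_{\mathcal A,a}$ onto $L_{Y,a}$.
   Context: Let $0<k<n$, $J=\{1,\dots,n\}$. On $\mathbb C^k$ (coordinates $t$) fix nonzero linear functions $g_j=b^1_jt_1+\dots+b^k_jt_k$, $j\in J$, spanning $(\mathbb C^k)^*$. On $\mathbb C^n\times\mathbb C^k$ (coordinates $z,t$) let $f_j=g_j+z_j$, $H_j=\{f_j=0\}$, and $U(\mathcal A)$ the complement of $\bigcup_jH_j$. Fix $a\in(\mathbb C^\times)^n$, $\Phi_{\mathcal A,a}=\sum_ja_j\log f_j$, and $C_{\mathcal A,a}=\{(x,u)\in U(\mathcal A):\partial\Phi_{\mathcal A,a}/\partial t_i(x,u)=0,\ i=1,\dots,k\}$, where $\partial\Phi_{\mathcal A,a}/\partial t_i=\sum_jb^i_ja_j/f_j$. $Y\subset\mathbb C^n$ is the $k$-dimensional subspace spanned by $b^i=(b^i_1,\dots,b^i_n)$, $i=1,\dots,k$.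 $\mathbb C^n$ has coordinates $q_1,\dots,q_n$ and $(\mathbb C^n)^*$ has dual coordinates $p_1,\dots,p_n$; $Y^\perp\subset(\mathbb C^n)^*$ is the annihilator of $Y$. With $r_a(q,p)=(q_1+a_1/p_1,\dots,q_n+a_n/p_n,p)$ (defined where all $p_j\ne0$), $L_{Y,a}=r_a(Y\times Y^\perp)$, the image of the points of $Y\times Y^\perp$ with all $p_j\neq 0$. *)

From HB Require Import structures.
From mathcomp Require Import all_boot all_order all_algebra.
From mathcomp Require Import all_classical all_reals all_analysis.
From mathcomp Require Import complex.
Set Implicit Arguments. Unset Strict Implicit. Unset Printing Implicit Defensive.
Import Order.TTheory GRing.Theory Num.Theory.
Import numFieldNormedType.Exports.
Local Open Scope classical_set_scope.
Local Open Scope ring_scope.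
Local Open Scope complex_scope.

(* ---------- Real C^oo smoothness for maps between complex normed spaces ---
   A complex vector space is regarded as a real one: derivatives are taken
   along every direction v with a REAL increment h (h%:C *: v).           *)
Section Smooth.
Variables (R : realType) (V W : normedModType R[i]).

Definition rdquot (F : V -> W) (x v : V) : R -> W :=
  fun h => (h%:C)^-1 *: (F (x + h%:C *: v) - F x).

Definition rderivable (F : V -> W) (x v : V) : Prop :=
  cvg (rdquot F x v @ (0 : R)^').

Definition rderive (F : V -> W) (x v : V) : W :=
  lim (rdquot F x v @ (0 : R)^').

Fixpoint riter_derive (vs : seq V) (F : V -> W) : V -> W :=
  match vs with
  | [::] => F
  | v :: vs' => fun x => rderive (riter_derive vs' F) x v
  end.

Definition smooth_on (U : set V) (F : V -> W) : Prop :=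
  forall vs : seq V,
    (forall x, U x -> forall v, rderivable (riter_derive vs F) x v) /\
    (forall x, U x -> {for x, continuous (riter_derive vs F)}).

Definition smooth_subset (A : set V) (F : V -> W) : Prop :=
  forall x, A x -> exists (U : set V) (G : V -> W),
    [/\ open U, U x, smooth_on U G & forall y, A y -> U y -> G y = F y].

End Smooth.

Definition diffeo_onto (R : realType) (V W : normedModType R[i])
    (A : set V) (B : set W) (F : V -> W) : Prop :=
  exists G : W -> V,
    [/\ (forall x, A x -> B (F x)),
        (forall y, B y -> A (G y)),
        (forall x, A x -> G (F x) = x),
        (forall y, B y -> F (G y) = y) &
        smooth_subset A F /\ smooth_subset B G].

(* ---------- The objects of the paper --------------------------------------
   b : 'M_(k, n) with b i j = b^i_j; g_j(t) = sum_i b^i_j t_i = (t *m b) 0 j.                     *)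
Section Paper.
Variables (R : realType) (n k : nat) (b : 'M[R[i]]_(k, n)) (a : 'rV[R[i]]_n).

Definition fA (j : 'I_n) (z : 'rV[R[i]]_n * 'rV[R[i]]_k) : R[i] :=
  (z.2 *m b) 0 j + z.1 0 j.

Definition UA : set ('rV[R[i]]_n * 'rV[R[i]]_k) :=
  [set z | forall j, fA j z != 0].

(* dPhi/dt_i = sum_j b^i_j a_j / f_j *)
Definition dPhi_dt (i : 'I_k) (z : 'rV[R[i]]_n * 'rV[R[i]]_k) : R[i] :=
  \sum_(j < n) b i j * a 0 j / fA j z.

Definition critA : set ('rV[R[i]]_n * 'rV[R[i]]_k) :=
  [set z | UA z /\ forall i, dPhi_dt i z = 0].

Definition PsiA (z : 'rV[R[i]]_n * 'rV[R[i]]_k) : 'rV[R[i]]_n * 'rV[R[i]]_n :=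
  (z.1, \row_j (a 0 j / fA j z)).

(* Y = span of the rows b^i; Y^perp = annihilator of Y in (C^n)^*,
   dual vectors p encoded by their coordinates as row vectors *)
Definition inY (q : 'rV[R[i]]_n) : bool := (q <= b)%MS.
Definition inYperp (p : 'rV[R[i]]_n) : Prop := b *m p^T = 0.

Definition r_a (qp : 'rV[R[i]]_n * 'rV[R[i]]_n) : 'rV[R[i]]_n * 'rV[R[i]]_n :=
  (\row_j (qp.1 0 j + a 0 j / qp.2 0 j), qp.2).

Definition L_Ya : set ('rV[R[i]]_n * 'rV[R[i]]_n) :=
  [set w | exists q p, [/\ inY q, inYperp p, (forall j, p 0 j != 0) & w = r_a (q, p)]].

End Paper.

(** Set [p_j = a_j / f_j(x,u)].  The critical equations say exactly that
    [p] lies in [Y^perp], and [x_j = q_j + a_j / p_j] with [q = -u b] in [Y];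
    so [Psi] maps [C_{A,a}] into [L_{Y,a}].  Since [b] has full row rank, [u]
    is recovered from [q] by a right inverse of [b], which gives the explicit
    inverse [(x, p) |-> (x, (a/p - x) b^+)].  Both [Psi] and this inverse have
    components that are rational functions of the coordinates whose
    denominators ([f_j], resp. [p_j]) do not vanish on a neighbourhood, hence
    are smooth. *)
From HB Require Import structures.
From mathcomp Require Import all_boot all_order all_algebra.
From mathcomp Require Import all_classical all_reals all_analysis.
From mathcomp Require Import complex.
From mathcomp Require Import ring.
Import Order.TTheory GRing.Theory Num.Theory.
Import numFieldNormedType.Exports.
Local Open Scope classical_set_scope.
Local Open Scope ring_scope.
Local Open Scope complex_scope.

Section RealIncrements.
Variable R : realType.
Local Notation C := (R[i])^o.

Lemma normc_real (h : R) : `|h%:C| = `|h|%:C :> R[i].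
Proof. by rewrite normc_def /= expr0n /= addr0 sqrtr_sqr. Qed.

Lemma real_complex_cvg0 : (fun h : R => (h%:C : C)) @ (0 : R)^' --> (0 : C).
Proof.
apply/cvgrPdist_lt => e e0.
have Ie : complex.Im e = 0 by exact: (@ger0_Im R e (ltW e0)).
have ee : e = (complex.Re e)%:C by rewrite {1}[e]complexE Ie mulr0 addr0.
have Re0 : 0 < complex.Re e by move: e0; rewrite ee ltcR.
near=> h; rewrite sub0r normrN normc_real ee ltcR.
near: h; exact: dnbhs0_lt.
Unshelve. all: by end_near. Qed.

Lemma real_complex_neq0 : \forall h \near (0 : R)^', (h%:C : C) != 0.
Proof.
near=> h; rewrite eqE /= negb_and; apply/orP; left.
by near: h; exact: nbhs_dnbhs_neq.
Unshelve. all: by end_near. Qed.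

Lemma cvg_real_line (V : normedModType R[i]) (z v : V) :
  (fun h : R => z + h%:C *: v) @ (0 : R)^' --> z.
Proof.
rewrite -[X in _ --> X]addr0; apply: cvgD; first exact: cvg_cst.
rewrite -[X in _ --> X](scale0r v).
by apply: cvgZ; [exact: real_complex_cvg0 | exact: cvg_cst].
Qed.

Lemma rdquot_near_eq (V W : normedModType R[i]) (U : set V) (F G : V -> W) z v :
  open U -> U z -> (forall y, U y -> F y = G y) ->
  \forall h \near (0 : R)^', rdquot F z v h = rdquot G z v h.
Proof.
move=> oU Uz FG; have nU : nbhs z U by apply: open_nbhs_nbhs.
near=> h; rewrite /rdquot !FG //; near: h.
exact: (cvg_real_line _ z v U nU).
Unshelve. all: by end_near. Qed.

End RealIncrements.

Arguments real_complex_neq0 {R}.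
Arguments cvg_real_line {R V} z v.
Arguments rdquot_near_eq {R V W U F G z} v.

Lemma cvg_near_eq {T} {U : topologicalType} {F : set_system T} {FF : Filter F}
    {f g : T -> U} {l : U} :
  (\forall x \near F, f x = g x) -> g @ F --> l -> f @ F --> l.
Proof.
move=> fg; apply: cvg_trans; apply: near_eq_cvg.
by apply: filterS fg => h ->.
Qed.

Lemma sum_pairE (T1 T2 : nmodType) (I : finType) (s : I -> T1 * T2) :
  \sum_(i : I) s i = (\sum_(i : I) (s i).1, \sum_(i : I) (s i).2).
Proof. by elim/big_rec3: _ => //= i x1 x2 x3 _ ->. Qed.

Section RationalExpressions.
Variables (R : realType) (m1 m2 : nat).
Local Notation C := (R[i])^o.

Definition pair_space : normedModType R[i] := ('rV[R[i]]_m1 * 'rV[R[i]]_m2)%type.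
Local Notation V := (NormedModule.sort pair_space).

Inductive rexpr :=
  | RConst of R[i] | RCoord1 of 'I_m1 | RCoord2 of 'I_m2
  | RAdd of rexpr & rexpr | RMul of rexpr & rexpr | RInv of rexpr.

Fixpoint reval (e : rexpr) (z : V) : C :=
  match e with
  | RConst c => c
  | RCoord1 j => z.1 0 j
  | RCoord2 j => z.2 0 j
  | RAdd e1 e2 => reval e1 z + reval e2 z
  | RMul e1 e2 => reval e1 z * reval e2 z
  | RInv e => (reval e z)^-1
  end.

Fixpoint rdefined (e : rexpr) (z : V) : Prop :=
  match e with
  | RConst _ | RCoord1 _ | RCoord2 _ => True
  | RAdd e1 e2 | RMul e1 e2 => rdefined e1 z /\ rdefined e2 z
  | RInv e => rdefined e z /\ reval e z != 0
  end.

Fixpoint rexpr_deriv (v : V) (e : rexpr) : rexpr :=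
  match e with
  | RConst _ => RConst 0
  | RCoord1 j => RConst (v.1 0 j)
  | RCoord2 j => RConst (v.2 0 j)
  | RAdd e1 e2 => RAdd (rexpr_deriv v e1) (rexpr_deriv v e2)
  | RMul e1 e2 => RAdd (RMul (rexpr_deriv v e1) e2) (RMul e1 (rexpr_deriv v e2))
  | RInv e => RMul (RMul (RConst (-1)) (rexpr_deriv v e)) (RMul (RInv e) (RInv e))
  end.

Lemma rdefined_deriv v e z : rdefined e z -> rdefined (rexpr_deriv v e) z.
Proof.
elim: e => //=.
- by move=> e1 IH1 e2 IH2 [d1 d2]; split; [exact: IH1 | exact: IH2].
- by move=> e1 IH1 e2 IH2 [d1 d2]; split; split => //; [exact: IH1 | exact: IH2].
- by move=> e IH [d nz]; split; split => //; exact: IH.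
Qed.

Lemma reval_cvg {e z} : rdefined e z -> reval e @ z --> reval e z.
Proof.
elim: e => /=.
- by move=> c _; exact: cvg_cst.
- move=> j _; apply: (@cvg_comp _ _ _ fst (fun M : 'rV_m1 => (M 0 j : C))).
    exact: cvg_fst.
  exact: coord_continuous.
- move=> j _; apply: (@cvg_comp _ _ _ snd (fun M : 'rV_m2 => (M 0 j : C))).
    exact: cvg_snd.
  exact: coord_continuous.
- by move=> e1 IH1 e2 IH2 [d1 d2]; exact: cvgD (IH1 d1) (IH2 d2).
- by move=> e1 IH1 e2 IH2 [d1 d2]; exact: cvgM (IH1 d1) (IH2 d2).
- by move=> e IH [d nz]; exact: cvgV nz (IH d).
Qed.

Lemma near_neq0 {T : Type} {F : set_system T} {FF : Filter F} {f : T -> C} {c : C} :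
  c != 0 -> f @ F --> c -> \forall x \near F, f x != 0.
Proof.
move=> c0 /cvgrPdist_lt/(_ `|c|); rewrite normr_gt0 => /(_ c0).
apply: filterS => x; apply: contraTneq => ->.
by rewrite subr0 ltxx.
Qed.

Lemma rdefined_near {e z} : rdefined e z -> \forall y \near z, rdefined e y.
Proof.
elim: e => /=; try by move=> *; apply: filterE.
- by move=> e1 IH1 e2 IH2 [/IH1 d1 /IH2 d2]; near=> y; split; near: y.
- by move=> e1 IH1 e2 IH2 [/IH1 d1 /IH2 d2]; near=> y; split; near: y.
- move=> e IH [d nz]; have nz_near := near_neq0 nz (reval_cvg d).
  by near=> y; split; near: y; [exact: IH | exact: nz_near].
Unshelve. all: by end_near. Qed.

Lemma reval_line_cvg {e z} v : rdefined e z ->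
  (fun h : R => reval e (z + h%:C *: v)) @ (0 : R)^' --> reval e z.
Proof. by move=> d; apply: cvg_comp (cvg_real_line z v) (reval_cvg d). Qed.

Lemma reval_rdquot_cvg {e z} v : rdefined e z ->
  rdquot (reval e) z v @ (0 : R)^' --> reval (rexpr_deriv v e) z.
Proof.
have D := dnbhs_filter (0 : R).
rewrite /rdquot; elim: e => /=.
- move=> c _; apply: (@cvg_near_eq _ _ _ _ _ (fun=> 0)); last exact: cvg_cst.
  by near=> h; rewrite subrr scaler0.
- move=> j _; apply: (@cvg_near_eq _ _ _ _ _ (fun=> v.1 0 j)); last exact: cvg_cst.
  apply: filterS real_complex_neq0 => h hn.
  by rewrite /= !mxE /GRing.scale /=; field.
- move=> j _; apply: (@cvg_near_eq _ _ _ _ _ (fun=> v.2 0 j)); last exact: cvg_cst.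
  apply: filterS real_complex_neq0 => h hn.
  by rewrite /= !mxE /GRing.scale /=; field.
- move=> e1 IH1 e2 IH2 [d1 d2].
  apply: cvg_near_eq (cvgD (IH1 d1) (IH2 d2)).
  by near=> h; rewrite /GRing.scale /= ?fctE; ring.
- move=> e1 IH1 e2 IH2 [d1 d2].
  have c1 := cvgM (IH1 d1) (reval_line_cvg v d2).
  have c2 := cvgM (@cvg_cst C (reval e1 z) R _ _) (IH2 d2).
  apply: cvg_near_eq (cvgD (c1 D) (c2 D D)).
  by near=> h; rewrite /GRing.scale /= ?fctE /=; ring.
- move=> e IH [d nz].
  have line := reval_line_cvg v d.
  have c1 := cvgM (@cvg_cst C (-1) R (0 : R)^' _) (IH d).
  have c2 := cvgM (cvgV nz line) (@cvg_cst C (reval e z)^-1 R (0 : R)^' _).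
  apply: cvg_near_eq (cvgM (c1 D D) (c2 D D D)).
  have nz_line := near_neq0 nz line.
  near=> h; have n1 : reval e (z + h%:C *: v) != 0 by near: h; exact: nz_line.
  rewrite /GRing.scale /=; field.
  by rewrite nz n1 /=; near: h; exact: real_complex_neq0.
Unshelve. all: by end_near. Qed.

Fixpoint rexpr_iter_deriv (vs : seq V) (e : rexpr) : rexpr :=
  if vs is v :: vs' then rexpr_deriv v (rexpr_iter_deriv vs' e) else e.

Lemma rdefined_iter_deriv vs e z :
  rdefined e z -> rdefined (rexpr_iter_deriv vs e) z.
Proof. by elim: vs => //= v vs IH /IH; exact: rdefined_deriv. Qed.

Section Combination.
Variables (W : normedModType R[i]) (I : finType) (w : I -> W).

Definition rcomb (E : I -> rexpr) (z : V) : W := \sum_(i : I) reval (E i) z *: w i.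

Definition rcomb_dom (E : I -> rexpr) : set V := [set z | forall i, rdefined (E i) z].

Lemma open_rcomb_dom E : open (rcomb_dom E).
Proof.
rewrite openE => z Ez; rewrite /interior /=.
exact: (filter_forall _ (fun i => rdefined_near (Ez i))).
Qed.

Lemma rcomb_cvg E z : rcomb_dom E z -> rcomb E @ z --> rcomb E z.
Proof.
move=> d; apply: cvg_big => [|i _]; first exact: add_continuous.
exact: cvgZ (reval_cvg (d i)) (cvg_cst (w i)).
Qed.

Lemma rcomb_rdquot_cvg E z v : rcomb_dom E z ->
  rdquot (rcomb E) z v @ (0 : R)^' --> rcomb (fun i => rexpr_deriv v (E i)) z.
Proof.
move=> d.
have -> : rdquot (rcomb E) z v =
    fun h => \sum_(i : I) rdquot (reval (E i)) z v h *: w i.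
  apply: funext => h; rewrite /rdquot /rcomb -sumrB scaler_sumr.
  by apply: eq_bigr => i _; rewrite -scalerBl scalerA.
apply: cvg_big => [|i _]; first exact: add_continuous.
exact: cvgZ (reval_rdquot_cvg v (d i)) (cvg_cst (w i)).
Qed.

(* Formal derivatives of rational expressions are rational expressions defined
   wherever the original one is, so every iterated derivative of [rcomb E] is
   again of the form [rcomb E'] on the open set [rcomb_dom E]. *)
Lemma smooth_on_rcomb E (F : V -> W) :
  (forall z, rcomb_dom E z -> F z = rcomb E z) -> smooth_on (rcomb_dom E) F.
Proof.
move=> FE.
have iter_deriv vs z : rcomb_dom E z ->
    riter_derive vs F z = rcomb (fun i => rexpr_iter_deriv vs (E i)) z.
  elim: vs z => [|v vs IH] z Ez /=; first exact: FE.
  apply: cvg_lim; first exact: norm_hausdorff.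
  apply: cvg_near_eq (rdquot_near_eq v (open_rcomb_dom E) Ez IH) _.
  by apply: rcomb_rdquot_cvg => i; apply: rdefined_iter_deriv.
move=> vs; split=> z Ez.
- move=> v; apply/cvg_ex; exists (rcomb (fun i => rexpr_deriv v (rexpr_iter_deriv vs (E i))) z).
  apply: cvg_near_eq (rdquot_near_eq v (open_rcomb_dom E) Ez (iter_deriv vs)) _.
  by apply: rcomb_rdquot_cvg => i; apply: rdefined_iter_deriv.
- have nE : \forall y \near z, riter_derive vs F y =
      rcomb (fun i => rexpr_iter_deriv vs (E i)) y.
    by apply: filterS (open_nbhs_nbhs (conj (open_rcomb_dom E) Ez)); exact: iter_deriv.
  apply: cvg_near_eq nE _; rewrite (iter_deriv vs z Ez).
  by apply: rcomb_cvg => i; apply: rdefined_iter_deriv.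
Qed.

Lemma smooth_subset_rcomb E (A : set V) (F : V -> W) :
  A `<=` rcomb_dom E -> (forall z, rcomb_dom E z -> F z = rcomb E z) ->
  smooth_subset A F.
Proof.
move=> AE FE z Az; exists (rcomb_dom E), F; split => //.
- exact: open_rcomb_dom.
- exact: AE.
- exact: smooth_on_rcomb.
Qed.

End Combination.

Definition rsum (N : nat) (f : 'I_N -> rexpr) : rexpr := \big[RAdd/RConst 0]_(l < N) f l.

Lemma reval_rsum N f z : reval (@rsum N f) z = \sum_(l < N) reval (f l) z.
Proof. exact: (big_morph (fun e => reval e z)). Qed.

Lemma rdefined_rsum N f z : (forall l, rdefined (f l) z) -> rdefined (@rsum N f) z.
Proof. by move=> H; apply: (big_ind (fun e => rdefined e z)). Qed.

End RationalExpressions.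

Arguments RConst {R m1 m2}. Arguments RCoord1 {R m1 m2}. Arguments RCoord2 {R m1 m2}.
Arguments RAdd {R m1 m2}. Arguments RMul {R m1 m2}. Arguments RInv {R m1 m2}.
Arguments rcomb {R m1 m2 W I}.
Arguments rcomb_dom {R m1 m2 I}.
Arguments reval {R m1 m2}.
Arguments rdefined {R m1 m2}.
Arguments rsum {R m1 m2 N}.
Arguments reval_rsum {R m1 m2 N}.
Arguments rdefined_rsum {R m1 m2 N f z}.
Arguments smooth_subset_rcomb {R m1 m2 W I} w E {A F}.

Section PairBasis.
Variables (R : realType) (m1 m2 p1 p2 : nat).

Definition pair_basis (i : 'I_p1 + 'I_p2) : pair_space R p1 p2 :=
  match i with inl j => (delta_mx 0 j, 0) | inr j => (0, delta_mx 0 j) end.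

Lemma rcomb_pair_basis (E : 'I_p1 + 'I_p2 -> rexpr R m1 m2) z :
  rcomb pair_basis E z =
    (\row_j reval (E (inl j)) z, \row_j reval (E (inr j)) z).
Proof.
rewrite /rcomb big_sumType !sum_pairE /=.
have sum_scale0 p q (c : 'I_p -> R[i]) : \sum_(i < p) c i *: (0 : 'rV[R[i]]_q) = 0.
  by apply: big1 => i _; exact: scaler0.
rewrite !sum_scale0; congr pair => /=; rewrite ?addr0 ?add0r [RHS]row_sum_delta;
  by apply: eq_bigr => j _; rewrite mxE.
Qed.

End PairBasis.

Arguments pair_basis {R p1 p2}.
Arguments rcomb_pair_basis {R m1 m2 p1 p2}.

Section ExplicitMaps.
Variables (R : realType) (n k : nat) (b : 'M[R[i]]_(k, n)) (a : 'rV[R[i]]_n).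

Definition PsiA_inv (y : 'rV[R[i]]_n * 'rV[R[i]]_n) : 'rV[R[i]]_n * 'rV[R[i]]_k :=
  (y.1, (\row_j (a 0 j / y.2 0 j - y.1 0 j)) *m pinvmx b).

Definition fA_expr (j : 'I_n) : rexpr R n k :=
  RAdd (rsum (fun l => RMul (RCoord2 l) (RConst (b l j)))) (RCoord1 j).

Lemma reval_fA_expr j z : reval (fA_expr j) z = fA b j z.
Proof. by rewrite /= reval_rsum /fA !mxE. Qed.

Definition PsiA_expr (i : 'I_n + 'I_n) : rexpr R n k :=
  match i with
  | inl j => RCoord1 j
  | inr j => RMul (RConst (a 0 j)) (RInv (fA_expr j))
  end.

Lemma PsiA_rcomb z : PsiA b a z = rcomb pair_basis PsiA_expr z.
Proof.
rewrite rcomb_pair_basis; congr pair; apply/rowP => j; rewrite !mxE //.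
by rewrite -reval_fA_expr.
Qed.

Lemma smooth_subset_PsiA : smooth_subset (critA b a) (PsiA b a).
Proof.
apply: (smooth_subset_rcomb pair_basis PsiA_expr) => [z [Uz _] [j|j] // | z _].
  split=> //; split; last by rewrite reval_fA_expr; exact: Uz.
  by split=> //; exact: rdefined_rsum.
exact: PsiA_rcomb.
Qed.

Definition PsiA_inv_expr (i : 'I_n + 'I_k) : rexpr R n n :=
  match i with
  | inl j => RCoord1 j
  | inr l => rsum (fun j => RMul
      (RAdd (RMul (RConst (a 0 j)) (RInv (RCoord2 j))) (RMul (RConst (-1)) (RCoord1 j)))
      (RConst (pinvmx b j l)))
  end.

Lemma PsiA_inv_rcomb y : PsiA_inv y = rcomb pair_basis PsiA_inv_expr y.
Proof.
rewrite rcomb_pair_basis; congr pair; apply/rowP => l; rewrite !mxE //=.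
by rewrite reval_rsum; apply: eq_bigr => j _; rewrite /= !mxE; ring.
Qed.

Lemma smooth_subset_PsiA_inv : smooth_subset (L_Ya b a) PsiA_inv.
Proof.
apply: (smooth_subset_rcomb pair_basis PsiA_inv_expr) => [_ [q [p [_ _ p0 ->]]] [j|l] //= | y _].
  by apply: rdefined_rsum => j /=.
exact: PsiA_inv_rcomb.
Qed.

End ExplicitMaps.

Arguments PsiA_inv {R n k}.

Section Inverse.
Variables (R : realType) (n k : nat) (b : 'M[R[i]]_(k, n)) (a : 'rV[R[i]]_n).
Hypothesis a_neq0 : forall j, a 0 j != 0.

Lemma PsiA_inv_r_a (q p : 'rV[R[i]]_n) :
  PsiA_inv b a (r_a a (q, p)) = (\row_j (q 0 j + a 0 j / p 0 j), - q *m pinvmx b).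
Proof. by congr (_, _ *m _); apply/rowP => j; rewrite !mxE; ring. Qed.

Lemma fA_PsiA_inv (q p : 'rV[R[i]]_n) j : inY b q ->
  fA b j (PsiA_inv b a (r_a a (q, p))) = a 0 j / p 0 j.
Proof. by move=> qY; rewrite PsiA_inv_r_a /fA /= !mulNmx mulmxKpV // !mxE; ring. Qed.

Lemma PsiA_in_L z : critA b a z -> L_Ya b a (PsiA b a z).
Proof.
case: z => x u [fA_neq0 crit].
exists (- (u *m b)), (\row_j (a 0 j / fA b j (x, u))); split.
- by rewrite /inY -mulNmx submxMl.
- apply/matrixP => i j0; rewrite ord1 !mxE -[RHS](crit i) /dPhi_dt.
  by apply: eq_bigr => j _; rewrite !mxE mulrA.
- by move=> j; rewrite mxE mulf_neq0 // invr_neq0.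
- congr pair; apply/rowP => j; rewrite !mxE.
  move: (fA_neq0 j); rewrite /fA /= !mxE => f0.
  by field; rewrite f0 a_neq0.
Qed.

Lemma PsiA_inv_in_critA y : L_Ya b a y -> critA b a (PsiA_inv b a y).
Proof.
case=> q [p [qY pY p0 ->]]; split=> [j | i].
  by rewrite fA_PsiA_inv // mulf_neq0 // invr_neq0.
have /matrixP/(_ i 0) := pY; rewrite !mxE => <-.
apply: eq_bigr => j _; rewrite fA_PsiA_inv // !mxE.
by field; rewrite a_neq0 p0.
Qed.

Lemma PsiAK z : row_free b -> critA b a z -> PsiA_inv b a (PsiA b a z) = z.
Proof.
case: z => x u free_b [fA_neq0 _]; rewrite /PsiA_inv /PsiA /=; congr pair.
rewrite -[RHS](mulmxKp free_b u); congr (_ *m _); apply/rowP => j.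
move: (fA_neq0 j); rewrite /fA /= !mxE => f0.
by field; rewrite f0 a_neq0.
Qed.

Lemma PsiA_invK y : L_Ya b a y -> PsiA b a (PsiA_inv b a y) = y.
Proof.
case=> q [p [qY _ p0 ->]]; congr pair; apply/rowP => j.
rewrite mxE fA_PsiA_inv //.
by field; rewrite a_neq0 p0.
Qed.

End Inverse.

Theorem theorem4p5 (R : realType) (n k : nat) (b : 'M[R[i]]_(k, n))
    (a : 'rV[R[i]]_n) :
  (0 < k)%N -> (k < n)%N ->
  (forall j : 'I_n, col j b != 0) ->
  \rank b = k ->
  (forall j : 'I_n, a 0 j != 0) ->
  (forall j : 'I_n, exists p : 'rV[R[i]]_n, inYperp b p /\ p 0 j != 0) ->
  (exists z, critA b a z) ->
  diffeo_onto (critA b a) (L_Ya b a) (PsiA b a).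
Proof.
move=> _ _ _ rank_b a_neq0 _ _.
have free_b : row_free b by rewrite /row_free rank_b.
exists (PsiA_inv b a); split.
- exact: PsiA_in_L.
- exact: PsiA_inv_in_critA.
- by move=> z; exact: PsiAK.
- exact: PsiA_invK.
- by split; [exact: smooth_subset_PsiA | exact: smooth_subset_PsiA_inv].
Qed.
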